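(* The category $\mathbf{OMLatGal}$ is a dagger kernel category. Its zero object is the one-element lattice, and the zero morphism $X\to Y$ is $z$ with $z_*(x)=1$, $z^*(y)=1$. The dagger kernel of a morphism $f:X\to Y$ is the morphism $k:\downarrow k\to X$ (as in the definition of downset morphisms below) where $k=f^*(1)\in X$.
   Context: An orthomodular lattice is a bounded lattice with an order-reversing involution $x\mapsto x^\perp$ such that $x\wedge x^\perp=0$, $x\vee x^\perp=1$, and $x\le y$ implies $y=x\vee(x^\perp\wedge y)$. The category $\mathbf{OMLatGal}$ has orthomodular lattices as objects; a morphism $f:X\to Y$ is a pair $(f_*,f^* )$ of order-reversing functions $f_*:X\to Y$, $f^*:Y\to X$ such that $y\le f_*(x)$ iff $x\le f^*(y)$ for all $x\in X,y\in Y$. The identity on $X$ is the pair whose both components are $x\mapsto x^\perp$. Composition of $f:X\to Y$ and $g:Y\to Z$ is $(g\circ f)_*=g_*\circ(-)^\perp\circ f_*$, $(g\circ f)^*=f^*\circ(-)^\perp\circ g^*$. The dagger is $(f_*,f^* )^\dagger=(f^*,f_* )$. For $a\in X$, $\downarrow a=\{u\in X:u\le a\}$ is an orthomodular lattice with the order, meets, joins of $X$ and complement $u^{\perp_a}=a\wedge u^\perp$; the downset morphism $a:\downarrow a\to X$ is given by $a_*(u)=u^\perp$, $a^*(x)=a\wedge x^\perp$. A dagger kernel category is a dagger category with a zero object in which every morphism has a kernel that is a dagger mono ($k^\dagger\circ k=\mathrm{id}$). *)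

Set Implicit Arguments.

Record OLat : Type := {
  car :> Type;
  le : car -> car -> Prop;
  meet : car -> car -> car;
  join : car -> car -> car;
  bot : car;
  top : car;
  orth : car -> car }.

Arguments le {o} _ _.
Arguments meet {o} _ _.
Arguments join {o} _ _.
Arguments bot {o}.
Arguments top {o}.
Arguments orth {o} _.

Record is_OML (X : OLat) : Prop := {
  oml_refl : forall x : X, le x x;
  oml_antisym : forall x y : X, le x y -> le y x -> x = y;
  oml_trans : forall x y z : X, le x y -> le y z -> le x z;
  oml_meet_l : forall x y : X, le (meet x y) x;
  oml_meet_r : forall x y : X, le (meet x y) y;
  oml_meet_glb : forall x y z : X, le z x -> le z y -> le z (meet x y);
  oml_join_l : forall x y : X, le x (join x y);
  oml_join_r : forall x y : X, le y (join x y);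
  oml_join_lub : forall x y z : X, le x z -> le y z -> le (join x y) z;
  oml_bot : forall x : X, le bot x;
  oml_top : forall x : X, le x top;
  oml_orth_anti : forall x y : X, le x y -> le (orth y) (orth x);
  oml_orth_invol : forall x : X, orth (orth x) = x;
  oml_orth_meet : forall x : X, meet x (orth x) = bot;
  oml_orth_join : forall x : X, join x (orth x) = top;
  oml_orthomod : forall x y : X, le x y -> y = join x (meet (orth x) y) }.

(** Morphisms of OMLatGal: pairs (f_*, f^* ). *)
Record Gal (X Y : OLat) : Type := { gs : X -> Y ; gu : Y -> X }.
Arguments gs {X Y} _ _.
Arguments gu {X Y} _ _.

Definition is_Gal {X Y : OLat} (f : Gal X Y) : Prop :=
  (forall x x' : X, le x x' -> le (gs f x') (gs f x)) /\
  (forall y y' : Y, le y y' -> le (gu f y') (gu f y)) /\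
  (forall (x : X) (y : Y), le y (gs f x) <-> le x (gu f y)).

Definition gid (X : OLat) : Gal X X := {| gs := @orth X; gu := @orth X |}.

Definition gcomp {X Y Z : OLat} (g : Gal Y Z) (f : Gal X Y) : Gal X Z :=
  {| gs := fun x => gs g (orth (gs f x));
     gu := fun z => gu f (orth (gu g z)) |}.

Definition gdag {X Y : OLat} (f : Gal X Y) : Gal Y X :=
  {| gs := gu f; gu := gs f |}.

Definition unitOL : OLat :=
  {| car := unit; le := fun _ _ => True; meet := fun _ _ => tt;
     join := fun _ _ => tt; bot := tt; top := tt; orth := fun _ => tt |}.

Definition gzero (X Y : OLat) : Gal X Y :=
  {| gs := fun _ => top; gu := fun _ => top |}.

Section Downset.
Variables (X : OLat) (HX : is_OML X) (a : X).

Definition dcar := { u : X | le u a }.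

Lemma d_meet_pf (u v : dcar) : le (meet (proj1_sig u) (proj1_sig v)) a.
Proof. exact (oml_trans HX _ _ _ (oml_meet_l HX _ _) (proj2_sig u)). Qed.

Lemma d_join_pf (u v : dcar) : le (join (proj1_sig u) (proj1_sig v)) a.
Proof. exact (oml_join_lub HX _ _ _ (proj2_sig u) (proj2_sig v)). Qed.

Lemma d_bot_pf : le (@bot X) a.
Proof. exact (oml_bot HX a). Qed.

Lemma d_top_pf : le a a.
Proof. exact (oml_refl HX a). Qed.

Lemma d_meet_a_pf (x : X) : le (meet a x) a.
Proof. exact (oml_meet_l HX a x). Qed.

Definition downset : OLat :=
  {| car := dcar;
     le := fun u v => le (proj1_sig u) (proj1_sig v);
     meet := fun u v => exist (fun w : X => le w a) _ (d_meet_pf u v);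
     join := fun u v => exist (fun w : X => le w a) _ (d_join_pf u v);
     bot := exist (fun w : X => le w a) _ d_bot_pf;
     top := exist (fun w : X => le w a) _ d_top_pf;
     orth := fun u => exist (fun w : X => le w a) _ (d_meet_a_pf (orth (proj1_sig u))) |}.

Definition downmor : Gal downset X :=
  {| gs := fun u : downset => orth (proj1_sig (u : dcar));
     gu := fun x : X => (exist (fun w : X => le w a) _ (d_meet_a_pf (orth x)) : downset) |}.

End Downset.

Arguments downset {X} HX a.
Arguments downmor {X} HX a.

Definition is_kernel {K X Y : OLat} (f : Gal X Y) (k : Gal K X) : Prop :=
  gcomp f k = gzero K Y /\
  forall (Z : OLat), is_OML Z -> forall g : Gal Z X, is_Gal g ->
    gcomp f g = gzero Z Y ->
    exists! h : Gal Z K, is_Gal h /\ gcomp k h = g.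

(** Morphisms are pairs of antitone maps forming a Galois
    connection; such a pair is determined by either component
    ([gal_upper_unique]), so equalities of morphisms reduce to equalities of
    lower components.  The category and dagger laws are then either
    definitional or follow from involutivity of [orth].

    The zero object is the one-element lattice: a Galois connection to or
    from it must send everything to [top] ([gal_to_unit_top],
    [gal_from_unit_top]).

    For kernels, the downset [↓a] with relative complement [u ↦ a ∧ u⊥] is
    again an orthomodular lattice; the single place where orthomodularity is
    essential is the involutivity of the relative complement
    ([relative_orth_invol]).  With [a = f^*(1)], the downset morphism kills
    [f]; any [g] with [f ∘ g = 0] has all [g_*(z)⊥] below [a] and factors
    uniquely through [↓a] via [z ↦ a ∧ g_*(z)], again by
    [relative_orth_invol].  Finally [a^† ∘ a = id] holds definitionally up to
    [orth] involutivity. *)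

From Stdlib Require Import FunctionalExtensionality ProofIrrelevance Setoid.
Set Implicit Arguments.

Section OMLFacts.
Variables (X : OLat) (HX : is_OML X).

Lemma orth_swap_r (x y : X) : le y (orth x) -> le x (orth y).
Proof.
  intro H. rewrite <- (oml_orth_invol HX x). now apply (oml_orth_anti HX).
Qed.

Lemma orth_swap_l (x y : X) : le (orth x) y -> le (orth y) x.
Proof.
  intro H. rewrite <- (oml_orth_invol HX x). now apply (oml_orth_anti HX).
Qed.

Lemma meet_comm (x y : X) : meet x y = meet y x.
Proof.
  apply (oml_antisym HX); apply (oml_meet_glb HX);
    first [apply (oml_meet_l HX) | apply (oml_meet_r HX)].
Qed.

Lemma meet_mono_r (a x y : X) : le x y -> le (meet a x) (meet a y).
Proof.
  intro H. apply (oml_meet_glb HX); [apply (oml_meet_l HX) |].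
  eapply (oml_trans HX); [apply (oml_meet_r HX) | exact H].
Qed.

Lemma orth_meet (x y : X) : orth (meet x y) = join (orth x) (orth y).
Proof.
  apply (oml_antisym HX).
  - apply orth_swap_l. apply (oml_meet_glb HX);
      apply orth_swap_l; [apply (oml_join_l HX) | apply (oml_join_r HX)].
  - apply (oml_join_lub HX); apply (oml_orth_anti HX);
      [apply (oml_meet_l HX) | apply (oml_meet_r HX)].
Qed.

Lemma orth_join (x y : X) : orth (join x y) = meet (orth x) (orth y).
Proof.
  rewrite <- (oml_orth_invol HX (meet _ _)), orth_meet, !(oml_orth_invol HX).
  reflexivity.
Qed.

(** This is
    exactly where the orthomodular law is used: from [a⊥ ≤ u⊥] it gives
    [u⊥ = a⊥ ∨ (a ∧ u⊥)], whose complement is [a ∧ (a ∧ u⊥)⊥]. *)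
Lemma relative_orth_invol (u a : X) :
  le u a -> meet a (orth (meet a (orth u))) = u.
Proof.
  intro Hua.
  assert (Hdecomp : orth u = join (orth a) (meet a (orth u))).
  { rewrite <- (oml_orth_invol HX a) at 2.
    apply (oml_orthomod HX), (oml_orth_anti HX), Hua. }
  set (w := meet a (orth u)) in *. clearbody w.
  rewrite <- (oml_orth_invol HX u), Hdecomp, orth_join, (oml_orth_invol HX).
  reflexivity.
Qed.

End OMLFacts.

Lemma dcar_eq (X : OLat) (a : X) (u v : dcar X a) :
  proj1_sig u = proj1_sig v -> u = v.
Proof. destruct u, v; simpl; intros ->. f_equal; apply proof_irrelevance. Qed.

Section DownsetOML.
Variables (X : OLat) (HX : is_OML X) (a : X).

Lemma relative_orth_meet (u : X) : meet u (meet a (orth u)) = bot.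
Proof.
  apply (oml_antisym HX); [| apply (oml_bot HX)].
  rewrite <- (oml_orth_meet HX u).
  apply (meet_mono_r HX), (oml_meet_r HX).
Qed.

Lemma relative_orth_join (u : X) :
  le u a -> join u (meet a (orth u)) = a.
Proof. intro Hua. rewrite (meet_comm HX). symmetry. now apply (oml_orthomod HX). Qed.

Lemma relative_orthomodular (u v : X) :
  le u v -> le v a -> v = join u (meet (meet a (orth u)) v).
Proof.
  intros Huv Hva.
  replace (meet (meet a (orth u)) v) with (meet (orth u) v).
  - now apply (oml_orthomod HX).
  - apply (oml_antisym HX); apply (oml_meet_glb HX).
    + apply (oml_meet_glb HX); [| apply (oml_meet_l HX)].
      eapply (oml_trans HX); [apply (oml_meet_r HX) | exact Hva].
    + apply (oml_meet_r HX).
    + eapply (oml_trans HX); [apply (oml_meet_l HX) | apply (oml_meet_r HX)].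
    + apply (oml_meet_r HX).
Qed.

Lemma downset_OML : is_OML (downset HX a).
Proof.
  constructor; simpl; intros.
  - apply (oml_refl HX).
  - apply dcar_eq. now apply (oml_antisym HX).
  - eapply (oml_trans HX); eauto.
  - apply (oml_meet_l HX).
  - apply (oml_meet_r HX).
  - now apply (oml_meet_glb HX).
  - apply (oml_join_l HX).
  - apply (oml_join_r HX).
  - now apply (oml_join_lub HX).
  - apply (oml_bot HX).
  - exact (proj2_sig x).
  - apply (meet_mono_r HX), (oml_orth_anti HX), H.
  - apply dcar_eq, (relative_orth_invol HX), (proj2_sig x).
  - apply dcar_eq, relative_orth_meet.
  - apply dcar_eq, relative_orth_join, (proj2_sig x).
  - apply dcar_eq, relative_orthomodular; [exact H | exact (proj2_sig y)].
Qed.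

End DownsetOML.

Lemma gal_ext (X Y : OLat) (f g : Gal X Y) :
  (forall x, gs f x = gs g x) -> (forall y, gu f y = gu g y) -> f = g.
Proof.
  destruct f, g; simpl; intros Hs Hu.
  apply functional_extensionality in Hs.
  apply functional_extensionality in Hu.
  now subst.
Qed.

Lemma gal_upper_unique (X Y : OLat) (HX : is_OML X) (f g : Gal X Y) :
  is_Gal f -> is_Gal g -> (forall x, gs f x = gs g x) ->
  forall y, gu f y = gu g y.
Proof.
  intros [_ [_ Af]] [_ [_ Ag]] E y. apply (oml_antisym HX).
  - apply Ag. rewrite <- E. apply Af, (oml_refl HX).
  - apply Af. rewrite E. apply Ag, (oml_refl HX).
Qed.

Lemma gal_eq_lower (X Y : OLat) (HX : is_OML X) (f g : Gal X Y) :
  is_Gal f -> is_Gal g -> (forall x, gs f x = gs g x) -> f = g.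
Proof. intros Hf Hg E. apply gal_ext; [exact E | now apply (gal_upper_unique HX)]. Qed.

Lemma gid_Gal (X : OLat) (HX : is_OML X) : is_Gal (gid X).
Proof.
  split; [| split]; simpl; intros.
  - now apply (oml_orth_anti HX).
  - now apply (oml_orth_anti HX).
  - split; apply (orth_swap_r HX).
Qed.

Lemma gcomp_Gal (X Y Z : OLat) (f : Gal X Y) (g : Gal Y Z) :
  is_OML X -> is_OML Y -> is_OML Z -> is_Gal f -> is_Gal g ->
  is_Gal (gcomp g f).
Proof.
  intros HX HY HZ [f1 [f2 f3]] [g1 [g2 g3]]. split; [| split]; simpl; intros.
  - apply g1, (oml_orth_anti HY), f1; assumption.
  - apply f2, (oml_orth_anti HY), g2; assumption.
  - rewrite g3, <- f3. split; apply (orth_swap_l HY).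
Qed.

Lemma gdag_Gal (X Y : OLat) (f : Gal X Y) : is_Gal f -> is_Gal (gdag f).
Proof.
  intros [f1 [f2 f3]]. split; [| split]; simpl; auto.
  intros; symmetry; apply f3.
Qed.

(** Identity laws: [orth] is involutive. *)
Lemma gcomp_gid (X Y : OLat) (f : Gal X Y) :
  is_OML X -> is_OML Y -> gcomp f (gid X) = f /\ gcomp (gid Y) f = f.
Proof.
  intros HX HY.
  split; apply gal_ext; simpl; intros;
    rewrite ?(oml_orth_invol HX), ?(oml_orth_invol HY); reflexivity.
Qed.

Lemma unit_OML : is_OML unitOL.
Proof.
  constructor; simpl; intros; auto;
    destruct x; try destruct y; reflexivity.
Qed.

Lemma gal_to_unit_top (X : OLat) (HX : is_OML X) (t : Gal X unitOL) :
  is_Gal t -> forall y, gu t y = top.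
Proof.
  intros [_ [_ At]] y. apply (oml_antisym HX); [apply (oml_top HX) |].
  apply At. exact I.
Qed.

Lemma gal_from_unit_top (Y : OLat) (HY : is_OML Y) (s : Gal unitOL Y) :
  is_Gal s -> forall x, gs s x = top.
Proof.
  intros [_ [_ As]] x. apply (oml_antisym HY); [apply (oml_top HY) |].
  apply As. exact I.
Qed.

Lemma to_unit (X : OLat) (HX : is_OML X) : exists! t : Gal X unitOL, is_Gal t.
Proof.
  exists {| gs := fun _ => (tt : unitOL); gu := fun _ => top |}. split.
  - split; [| split]; simpl; intros; [exact I | apply (oml_refl HX) |].
    split; intros; [apply (oml_top HX) | exact I].
  - intros t Ht. apply gal_ext; simpl.
    + intro x. now destruct (gs t x).
    + intro y. symmetry. now apply (gal_to_unit_top HX).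
Qed.

Lemma from_unit (X : OLat) (HX : is_OML X) : exists! s : Gal unitOL X, is_Gal s.
Proof.
  exists {| gs := fun _ => top; gu := fun _ => (tt : unitOL) |}. split.
  - split; [| split]; simpl; intros; [apply (oml_refl HX) | exact I |].
    split; intros; [exact I | apply (oml_top HX)].
  - intros s Hs. apply gal_ext; simpl.
    + intro x. symmetry. now apply (gal_from_unit_top HX).
    + intro y. now destruct (gu s y).
Qed.

Lemma zero_through_unit (X Y : OLat) (t : Gal X unitOL) (s : Gal unitOL Y) :
  is_OML X -> is_OML Y -> is_Gal t -> is_Gal s -> gcomp s t = gzero X Y.
Proof.
  intros HX HY Ht Hs. apply gal_ext; simpl; intros.
  - now apply (gal_from_unit_top HY).
  - now apply (gal_to_unit_top HX).
Qed.

Section DownsetMorphism.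
Variables (X : OLat) (HX : is_OML X) (a : X).

Lemma downmor_Gal : is_Gal (downmor HX a).
Proof.
  split; [| split]; simpl; intros.
  - now apply (oml_orth_anti HX).
  - apply (meet_mono_r HX), (oml_orth_anti HX), H.
  - split; intro H.
    + apply (oml_meet_glb HX); [exact (proj2_sig x) | now apply (orth_swap_r HX)].
    + apply (orth_swap_r HX). eapply (oml_trans HX); [exact H | apply (oml_meet_r HX)].
Qed.

Lemma downmor_dagger_mono :
  gcomp (gdag (downmor HX a)) (downmor HX a) = gid (downset HX a).
Proof.
  apply gal_ext; simpl; intros; apply dcar_eq; simpl;
    rewrite (oml_orth_invol HX); reflexivity.
Qed.

End DownsetMorphism.

Section Kernel.
Variables (X Y : OLat) (HX : is_OML X) (HY : is_OML Y) (f : Gal X Y).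
Hypothesis Hf : is_Gal f.
Let a := gu f top.

Lemma kernel_kills : gcomp f (downmor HX a) = gzero (downset HX a) Y.
Proof.
  destruct Hf as [_ [f2 f3]].
  apply gal_ext; simpl; intros.
  - rewrite (oml_orth_invol HX). apply (oml_antisym HY); [apply (oml_top HY) |].
    apply f3, (proj2_sig x).
  - apply dcar_eq; simpl. rewrite (oml_orth_invol HX).
    apply (oml_antisym HX); [apply (oml_meet_l HX) |].
    apply (oml_meet_glb HX); [apply (oml_refl HX) | apply f2, (oml_top HY)].
Qed.

Section Factorization.
Variables (Z : OLat) (HZ : is_OML Z) (g : Gal Z X).
Hypothesis Hg : is_Gal g.
Hypothesis Hfg : gcomp f g = gzero Z Y.

Lemma kernel_bound (z : Z) : le (orth (gs g z)) a.
Proof.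
  apply (proj2 (proj2 Hf)).
  apply (f_equal (fun h => gs h z)) in Hfg. simpl in Hfg.
  rewrite Hfg. apply (oml_refl HY).
Qed.

Definition mediator : Gal Z (downset HX a) :=
  {| gs := fun z => (exist (fun w : X => le w a) (meet a (gs g z))
                       (oml_meet_l HX _ _) : downset HX a);
     gu := fun u : downset HX a => gu g (proj1_sig (u : dcar X a)) |}.

Lemma mediator_Gal : is_Gal mediator.
Proof.
  destruct Hg as [g1 [g2 g3]].
  split; [| split]; simpl; intros.
  - now apply (meet_mono_r HX), g1.
  - now apply g2.
  - rewrite <- g3. split; intro H.
    + eapply (oml_trans HX); [exact H | apply (oml_meet_r HX)].
    + apply (oml_meet_glb HX); [exact (proj2_sig y) | exact H].
Qed.

(** [g] factors through [↓a] via the mediator: since [g_*(z)⊥ ≤ a], the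
    relative complement of [a ∧ g_*(z)] in [↓a] is [g_*(z)⊥]. *)
Lemma mediator_factors : gcomp (downmor HX a) mediator = g.
Proof.
  apply (gal_eq_lower HZ).
  - apply gcomp_Gal; auto using downset_OML, mediator_Gal, downmor_Gal.
  - exact Hg.
  - intro z. simpl.
    rewrite <- (oml_orth_invol HX (gs g z)) at 2. f_equal.
    pose proof (relative_orth_invol HX _ _ (kernel_bound z)) as K.
    now rewrite (oml_orth_invol HX) in K.
Qed.

(** Any factorization [h] of [g] through [↓a] has [h_*(z) = a ∧ g_*(z)]. *)
Lemma mediator_unique (h : Gal Z (downset HX a)) :
  is_Gal h -> gcomp (downmor HX a) h = g -> h = mediator.
Proof.
  intros Hh E. apply (gal_eq_lower HZ); [exact Hh | exact mediator_Gal |].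
  intro z. apply dcar_eq. simpl.
  apply (f_equal (fun k => gs k z)) in E. simpl in E.
  rewrite <- E. symmetry. apply (relative_orth_invol HX), (proj2_sig (gs h z)).
Qed.

End Factorization.

Lemma downmor_is_kernel : is_kernel f (downmor HX a).
Proof.
  split; [exact kernel_kills |].
  intros Z HZ g Hg Hfg. exists (mediator g). split.
  - split; [exact (mediator_Gal Hg) | exact (mediator_factors HZ Hg Hfg)].
  - intros h [Hh E]. symmetry. now apply (mediator_unique HZ).
Qed.

End Kernel.

Theorem mainTheorem3 :
  (* OMLatGal is a category *)
  (forall X : OLat, is_OML X -> is_Gal (gid X)) /\
  (forall (X Y Z : OLat) (f : Gal X Y) (g : Gal Y Z),
      is_OML X -> is_OML Y -> is_OML Z -> is_Gal f -> is_Gal g ->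
      is_Gal (gcomp g f)) /\
  (forall (X Y : OLat) (f : Gal X Y),
      is_OML X -> is_OML Y -> is_Gal f ->
      gcomp f (gid X) = f /\ gcomp (gid Y) f = f) /\
  (forall (W X Y Z : OLat) (f : Gal W X) (g : Gal X Y) (h : Gal Y Z),
      is_OML W -> is_OML X -> is_OML Y -> is_OML Z ->
      is_Gal f -> is_Gal g -> is_Gal h ->
      gcomp h (gcomp g f) = gcomp (gcomp h g) f) /\
  (* the dagger makes it a dagger category *)
  (forall (X Y : OLat) (f : Gal X Y),
      is_OML X -> is_OML Y -> is_Gal f -> is_Gal (gdag f)) /\
  (forall (X Y : OLat) (f : Gal X Y), gdag (gdag f) = f) /\
  (forall X : OLat, gdag (gid X) = gid X) /\
  (forall (X Y Z : OLat) (f : Gal X Y) (g : Gal Y Z),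
      gdag (gcomp g f) = gcomp (gdag f) (gdag g)) /\
  (* the one-element lattice is a zero object *)
  is_OML unitOL /\
  (forall X : OLat, is_OML X -> exists! t : Gal X unitOL, is_Gal t) /\
  (forall X : OLat, is_OML X -> exists! s : Gal unitOL X, is_Gal s) /\
  (* the zero morphism X -> Y (factoring through unitOL) is gzero *)
  (forall (X Y : OLat) (t : Gal X unitOL) (s : Gal unitOL Y),
      is_OML X -> is_OML Y -> is_Gal t -> is_Gal s ->
      gcomp s t = gzero X Y) /\
  (* every morphism has a dagger kernel, namely the downset morphism of f^*(1) *)
  (forall (X Y : OLat) (HX : is_OML X) (HY : is_OML Y) (f : Gal X Y),
      is_Gal f ->
      is_OML (downset HX (gu f top)) /\
      is_Gal (downmor HX (gu f top)) /\
      is_kernel f (downmor HX (gu f top)) /\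
      gcomp (gdag (downmor HX (gu f top))) (downmor HX (gu f top))
        = gid (downset HX (gu f top))).
Proof.
  split; [exact gid_Gal |].
  split; [exact gcomp_Gal |].
  split; [intros X Y f HX HY _; now apply gcomp_gid |].
  (* associativity and the dagger laws hold definitionally *)
  split; [reflexivity |].
  split; [intros X Y f _ _; exact (@gdag_Gal X Y f) |].
  split; [intros X Y [f1 f2]; reflexivity |].
  split; [reflexivity |].
  split; [reflexivity |].
  split; [exact unit_OML |].
  split; [exact to_unit |].
  split; [exact from_unit |].
  split; [exact zero_through_unit |].
  intros X Y HX HY f Hf.
  split; [apply downset_OML |].
  split; [apply downmor_Gal |].
  split; [exact (downmor_is_kernel HX HY Hf) |].
  apply downmor_dagger_mono.
Qed.
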